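(* Let $A\in\mathbb{R}^{n\times n}$ and $B\in\mathbb{R}^{n\times m}$ with $(A,B)$ controllable. Let $E(\alpha)$ and $F(\alpha)$ be real polynomial matrices in the scalar indeterminate $\alpha\in\mathbb{R}$, of sizes $n\times n$ and $n\times m$ respectively, with $E(0)=0$ and $F(0)=0$. Then there exists $\bar\alpha>0$ such that $(A+E(\alpha),B+F(\alpha))$ is controllable for all $\alpha\in\mathbb{R}$ with $|\alpha|\ge\bar\alpha$.
   Context: A pair $(A,B)$ is controllable if $\operatorname{rank}[B\ AB\ \cdots\ A^{n-1}B]=n$. *)

From HB Require Import structures.
From mathcomp Require Import all_boot all_order all_algebra.
From mathcomp Require Import reals.
Set Implicit Arguments. Unset Strict Implicit. Unset Printing Implicit Defensive.
Import Order.TTheory GRing.Theory Num.Theory.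
Local Open Scope ring_scope.

Definition ctrb_mx {F : fieldType} {n m : nat} (A : 'M[F]_n) (B : 'M[F]_(n, m))
  : 'M[F]_(n, \sum_(k < n) m) :=
  \mxrow_(k < n) (A ^+ k *m B).

Definition controllable {F : fieldType} {n m : nat} (A : 'M[F]_n) (B : 'M[F]_(n, m)) : Prop :=
  \rank (ctrb_mx A B) = n.

Definition peval_mx {F : fieldType} {p q : nat} (P : 'M[{poly F}]_(p, q)) (a : F)
  : 'M[F]_(p, q) := map_mx (fun c => c.[a]) P.

From HB Require Import structures.
From mathcomp Require Import all_boot all_order all_algebra.
From mathcomp Require Import reals polyrcf.
Set Implicit Arguments. Unset Strict Implicit. Unset Printing Implicit Defensive.
Import Order.TTheory GRing.Theory Num.Theory.
Local Open Scope ring_scope.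

(* Perturbing (A, B) polynomially in alpha, the controllability matrix becomes
   a polynomial matrix C(alpha).  Since C(0) = [B AB ... A^(n-1)B] has full row
   rank, it has a right inverse D, so p(alpha) := det (C(alpha) D) is a
   polynomial with p(0) = 1.  Whenever p(alpha) != 0 the matrix C(alpha) still
   has rank n, and by the Cauchy bound on the roots of p this holds for all
   |alpha| large enough. *)

Lemma map_mxrow (aT rT : Type) (m q : nat) (p_ : 'I_q -> nat)
    (f : aT -> rT) (B_ : forall j : 'I_q, 'M[aT]_(m, p_ j)) :
  map_mx f (\mxrow_j B_ j) = \mxrow_j map_mx f (B_ j).
Proof.
apply/matrixP => i j.
have colE T (M : 'M[T]_(m, \sum_j p_ j)) : M i j = col j M i 0 by rewrite mxE.
by rewrite colE [RHS]colE !col_mxrow !mxE.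
Qed.

Lemma map_mxX (aR rR : comNzRingType) (f : {rmorphism aR -> rR}) (n k : nat)
    (M : 'M[aR]_n) :
  map_mx f (M ^+ k) = map_mx f M ^+ k.
Proof.
elim: k => [|k IHk]; first by rewrite !expr0 map_mx1.
by rewrite !exprS map_mxM IHk.
Qed.

Lemma controllable_of_unit_mulmx (F : fieldType) (n m : nat)
    (A : 'M[F]_n) (B : 'M[F]_(n, m)) (D : 'M[F]_(\sum_(k < n) m, n)) :
  ctrb_mx A B *m D \in unitmx -> controllable A B.
Proof.
move=> unitCD; apply/eqP; rewrite /controllable eqn_leq rank_leq_row /=.
by rewrite -{1}(mxrank_unit unitCD) mxrankM_maxl.
Qed.

Section PolynomialMatrices.

Variable F : fieldType.

Lemma peval_mxE (p q : nat) (P : 'M[{poly F}]_(p, q)) (a : F) :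
  peval_mx P a = map_mx (horner_eval a) P.
Proof. by apply/matrixP => i j; rewrite !mxE. Qed.

Lemma peval_mx_polyC (p q : nat) (M : 'M[F]_(p, q)) (a : F) :
  peval_mx (map_mx polyC M) a = M.
Proof. by apply/matrixP => i j; rewrite !mxE hornerC. Qed.

Lemma peval_mxD (p q : nat) (P Q : 'M[{poly F}]_(p, q)) (a : F) :
  peval_mx (P + Q) a = peval_mx P a + peval_mx Q a.
Proof. by rewrite !peval_mxE map_mxD. Qed.

Definition pctrb_mx (n m : nat) (P : 'M[{poly F}]_n) (Q : 'M[{poly F}]_(n, m))
  : 'M[{poly F}]_(n, \sum_(k < n) m) :=
  \mxrow_(k < n) (P ^+ k *m Q).

Lemma peval_pctrb_mx (n m : nat) (P : 'M[{poly F}]_n)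
    (Q : 'M[{poly F}]_(n, m)) (a : F) :
  peval_mx (pctrb_mx P Q) a = ctrb_mx (peval_mx P a) (peval_mx Q a).
Proof.
rewrite !peval_mxE map_mxrow; apply: eq_mxrow => k.
by rewrite map_mxM map_mxX.
Qed.

Lemma controllable_generic (n m : nat) (P : 'M[{poly F}]_n)
    (Q : 'M[{poly F}]_(n, m)) (a0 : F) :
  controllable (peval_mx P a0) (peval_mx Q a0) ->
  exists2 p : {poly F}, p != 0 &
    forall a, p.[a] != 0 -> controllable (peval_mx P a) (peval_mx Q a).
Proof.
move=> ctrl0.
have /row_freeP [D CD1] : row_free (ctrb_mx (peval_mx P a0) (peval_mx Q a0)).
  by rewrite /row_free ctrl0.
pose p := \det (pctrb_mx P Q *m map_mx polyC D).
have pE a : p.[a] = \det (ctrb_mx (peval_mx P a) (peval_mx Q a) *m D).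
  by rewrite -horner_evalE -det_map_mx map_mxM -!peval_mxE peval_pctrb_mx
             peval_mx_polyC.
exists p => [|a pa_neq0].
  apply: contra_neq (oner_neq0 F) => p0.
  by rewrite -(det1 F n) -CD1 -pE p0 horner0.
by apply: (controllable_of_unit_mulmx (D := D)); rewrite unitmxE unitfE -pE.
Qed.

End PolynomialMatrices.

Lemma poly_neq0_for_large_norm (R : realFieldType) (p : {poly R}) :
  p != 0 -> exists2 b : R, 0 < b & forall a, b <= `|a| -> p.[a] != 0.
Proof.
move=> p_neq0; exists (cauchy_bound p) => [|a].
  by rewrite ltr_pwDl ?ltr01 ?mulr_ge0 ?invr_ge0 ?sumr_ge0.
by rewrite leNgt; apply: contraNneq => /(cauchy_boundP p_neq0).
Qed.

Theorem lemma3 (R : realType) (n m : nat)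
  (A : 'M[R]_n) (B : 'M[R]_(n, m))
  (E : 'M[{poly R}]_n) (F : 'M[{poly R}]_(n, m)) :
  controllable A B ->
  peval_mx E 0 = 0 ->
  peval_mx F 0 = 0 ->
  exists abar : R, 0 < abar /\
    forall alpha : R, abar <= `|alpha| ->
      controllable (A + peval_mx E alpha) (B + peval_mx F alpha).
Proof.
move=> ctrlAB E0 F0.
pose P := map_mx polyC A + E; pose Q := map_mx polyC B + F.
have PQE a : peval_mx P a = A + peval_mx E a /\ peval_mx Q a = B + peval_mx F a.
  by rewrite !peval_mxD !peval_mx_polyC.
have ctrl0 : controllable (peval_mx P 0) (peval_mx Q 0).
  by have [-> ->] := PQE 0; rewrite E0 F0 !addr0.
have [p p_neq0 ctrl_p] := controllable_generic ctrl0.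
have [b b_gt0 pb] := poly_neq0_for_large_norm p_neq0.
exists b; split=> // alpha b_le.
by have [<- <-] := PQE alpha; apply/ctrl_p/pb.
Qed.
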